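(* Let $a,b,c\in\mathbb{RP}^1$ be distinct. Let $U=(u_1,\dots,u_6)$ be a 6-tuple of nonzero vectors in $\mathbb R^2$ with $[u_1]=[u_2]=[u_3]=a$ and $[u_4]=[u_5]=[u_6]=b$ (so its configuration is $3\cdot\{a,b\}$), and let $U'=(u'_1,\dots,u'_6)$ be a 6-tuple of nonzero vectors with $[u'_1]=[u'_2]=[u'_3]=a$, $[u'_4]=[u'_5]=b$ and $[u'_6]=c$ (configuration $\{3\cdot a,2\cdot b,c\}$). Then $\Phi(U)$ and $\Phi(U')$ generate the same ray of $C_{6,2}$.
   Context: $[u]\in\mathbb{RP}^1$ denotes the point determined by a nonzero $u\in\mathbb R^2$. For a 6-tuple $U$ of vectors, $\Phi(U)\in\mathbb R^{15}$ is the vector with coordinates $\mathrm V_{I_1}\mathrm V_{I_2}\mathrm V_{I_3}$ indexed by the 15 partitions $I_1|I_2|I_3$ of $[6]$ into pairs, where $\mathrm V_{\{i,j\}}=\tfrac12|\det(u_i,u_j)|$ is the mixed area of the segments $[0,u_i],[0,u_j]$. $C_{6,2}$ is the conic hull of $\Phi(\mathcal Z_2^6)$, where $\Phi(Z)$ for zonoids $Z=(Z_1,\dots,Z_6)$ in $\mathbb R^2$ is defined in the same way with $\mathrm V_{\{i,j\}}=\mathrm V(Z_i,Z_j)$ the mixed area. *)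

From mathcomp Require Import all_boot all_order all_algebra.
Set Implicit Arguments. Unset Strict Implicit. Unset Printing Implicit Defensive.
Import Order.TTheory GRing.Theory Num.Theory.
Local Open Scope ring_scope.

Definition det2 {R : ringType} (u v : R * R) : R := u.1 * v.2 - u.2 * v.1.

(* [u] = [v] in RP^1, for nonzero u v: u and v are proportional. *)
Definition same_line {R : ringType} (u v : R * R) : Prop := det2 u v = 0.

Definition nonzero2 {R : ringType} (u : R * R) : Prop := u != (0, 0).

Definition is_pairing (P : {set {set 'I_6}}) : bool :=
  partition P [set: 'I_6] && [forall B in P, #|B| == 2%N].

Definition pairing := {P : {set {set 'I_6}} | is_pairing P}.

(* Mixed area of the segments [0,u_i],[0,u_j] for B = {i,j}. *)
Definition VB {R : realFieldType} (U : 'I_6 -> R * R) (B : {set 'I_6}) : R :=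
  let s := enum B in
  2^-1 * `| det2 (U (nth ord0 s 0)) (U (nth ord0 s 1)) |.

(* Phi(U) in R^15, coordinates indexed by pairings. *)
Definition Phi {R : realFieldType} (U : 'I_6 -> R * R) (P : pairing) : R :=
  \prod_(B in val P) VB U B.

(** Call a pairing of [6] crossing if each of its pairs meets both {0,1,2}
    and {3,4,5}.  A pairing that is not crossing has a pair inside {0,1,2},
    whose vectors are parallel, so both [Phi U] and [Phi U'] vanish on it.
    On a crossing pairing, writing u_i = k_i a for i < 3, the product
    [Phi U P] equals prod_{i<3} |k_i| * prod_{j>=3} |det(a, u_j)|/2: it does
    not depend on P, and it is positive because the u_j with j >= 3 are not
    parallel to a.  The same holds for U', so [Phi U] and [Phi U'] are
    positive multiples of the indicator of the crossing pairings. *)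

From mathcomp Require Import all_boot all_order all_algebra.
From mathcomp Require Import zify ring.
Import Order.TTheory GRing.Theory Num.Theory.
Set Implicit Arguments. Unset Strict Implicit.

Lemma sum_nat_le1_eq_card (I : finType) (A : {pred I}) (F : I -> nat) :
  (forall i, i \in A -> F i <= 1) -> \sum_(i in A) F i = #|A| ->
  forall i, i \in A -> F i = 1.
Proof.
move=> F_le1 sumF i Ai.
have : \sum_(j in A) (F j + (1 - F j)) = #|A|.
  rewrite (eq_bigr (fun=> 1)) => [|j Aj]; last by rewrite subnKC ?F_le1.
  by rewrite sum_nat_const muln1.
rewrite big_split /= sumF -[RHS]addn0 => /addnI/eqP.
rewrite sum_nat_eq0 => /forall_inP/(_ i Ai).
by have := F_le1 i Ai; lia.
Qed.

Definition crossing_pair (B : {set 'I_6}) : Prop :=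
  exists x y : 'I_6, [/\ x < 3, 3 <= y & B = [set x; y]].

Section Pairings.
Variable P : pairing.

Lemma pairing_partition : partition (val P) [set: 'I_6].
Proof. by have /andP[] := valP P. Qed.

Lemma pairing_pair B : B \in val P -> exists x y : 'I_6, x != y /\ B = [set x; y].
Proof. by have /andP[_ /forall_inP card2] := valP P => /card2/cards2P. Qed.

Lemma card_pairing : #|val P| = 3.
Proof.
have := card_partition pairing_partition; rewrite cardsT card_ord.
rewrite (eq_bigr (fun=> 2)) => [|B /pairing_pair[x [y [xy ->]]]]; last first.
  by rewrite cards2 xy.
by rewrite sum_nat_const; lia.
Qed.

Lemma pairing_lower_pair_or_crossing :
  (exists x y : 'I_6, [/\ x != y, x < 3, y < 3 & [set x; y] \in val P]) \/
  (forall B, B \in val P -> crossing_pair B).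
Proof.
pose lower_count (B : {set 'I_6}) := \sum_(i in B) (i < 3 : nat).
have count2 (x y : 'I_6) : x != y -> lower_count [set x; y] = (x < 3) + (y < 3).
  by move=> xy; rewrite /lower_count big_setU1 ?big_set1 // inE.
case: (boolP [exists x : 'I_6, exists y : 'I_6,
                [&& x != y, x < 3, y < 3 & [set x; y] \in val P]]).
  by move=> /existsP[x /existsP[y /and4P[]]]; left; exists x, y.
move=> no_lower; right.
have count_le1 B : B \in val P -> lower_count B <= 1.
  move=> BP; have [x [y [xy eB]]] := pairing_pair BP; rewrite eB count2 //.
  case x_lo: (x < 3); case y_lo: (y < 3) => //.
  by case/negP: no_lower; apply/existsP; exists x; apply/existsP; exists y;
    rewrite xy x_lo y_lo -eB BP.
have count_sum : \sum_(B in val P) lower_count B = #|val P|.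
  have /and3P[/eqP cover_all triv _] := pairing_partition.
  rewrite card_pairing /lower_count -(big_trivIset _ triv) cover_all.
  by rewrite (eq_bigl xpredT) => [|i]; rewrite ?inE // !big_ord_recr big_ord0.
move=> B BP; have := sum_nat_le1_eq_card count_le1 count_sum BP.
have [x [y [xy ->]]] := pairing_pair BP; rewrite count2 //.
case x_lo: (x < 3); case y_lo: (y < 3) => //= _.
  by exists x, y; split => //; rewrite leqNgt y_lo.
by exists y, x; split => //; [rewrite leqNgt x_lo | rewrite setUC].
Qed.

End Pairings.

Definition mod3_pairing_set : {set {set 'I_6}} :=
  preim_partition (fun i : 'I_6 => i %% 3) [set: 'I_6].

Lemma mod3_pairing_crossing B : B \in mod3_pairing_set -> crossing_pair B.
Proof.
case/imsetP => x _ ->.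
have [r_le5 r3_le5] : x %% 3 <= 5 /\ x %% 3 + 3 <= 5 by lia.
exists (inord (x %% 3)), (inord (x %% 3 + 3)).
rewrite !inordK // ltn_mod leq_addl; split => //.
apply/setP => y; rewrite !inE -!val_eqE /= !inordK //.
by move: (ltn_ord y) => y_lt6; apply/idP/idP => [/eqP|/orP[]/eqP]; lia.
Qed.

Lemma mod3_is_pairing : is_pairing mod3_pairing_set.
Proof.
apply/andP; split; first exact: preim_partitionP.
apply/forall_inP => B /mod3_pairing_crossing[x [y [x_lo y_hi ->]]].
by rewrite cards2 -val_eqE neq_ltn (leq_trans x_lo y_hi).
Qed.

Definition mod3_pairing : pairing := exist _ mod3_pairing_set mod3_is_pairing.

Local Open Scope ring_scope.

Section Lines.
Variable R : realFieldType.
Implicit Types u v w : R * R.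

Lemma det2C u v : det2 v u = - det2 u v.
Proof. rewrite /det2; ring. Qed.

Lemma same_line_sym u v : same_line u v -> same_line v u.
Proof. by rewrite /same_line => uv; rewrite det2C uv oppr0. Qed.

Lemma nonzero2P u : nonzero2 u -> u.1 != 0 \/ u.2 != 0.
Proof.
by case: u => u1 u2; rewrite /nonzero2 xpair_eqE negb_and => /orP.
Qed.

Lemma same_line_trans v u w :
  nonzero2 v -> same_line u v -> same_line v w -> same_line u w.
Proof.
rewrite /same_line /det2 => /nonzero2P v_nz uv vw.
have e1 : (u.1 * w.2 - u.2 * w.1) * v.1 =
  w.1 * (u.1 * v.2 - u.2 * v.1) + u.1 * (v.1 * w.2 - v.2 * w.1) by ring.
have e2 : (u.1 * w.2 - u.2 * w.1) * v.2 =
  w.2 * (u.1 * v.2 - u.2 * v.1) + u.2 * (v.1 * w.2 - v.2 * w.1) by ring.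
rewrite uv vw !mulr0 addr0 in e1 e2.
by case: v_nz => v_nz; apply/eqP; rewrite -(mulIr_eq0 _ (mulIf v_nz)) ?e1 ?e2.
Qed.

Lemma not_same_line_trans u v w :
  nonzero2 v -> same_line v w -> ~ same_line u w -> ~ same_line u v.
Proof. by move=> v_nz vw uw uv; apply: uw (same_line_trans v_nz uv vw). Qed.

Definition line_coord (a u : R * R) : R :=
  if a.1 != 0 then u.1 / a.1 else u.2 / a.2.

Lemma line_coordP a u :
  nonzero2 a -> same_line u a -> u = (line_coord a u * a.1, line_coord a u * a.2).
Proof.
move=> /nonzero2P a_nz /eqP; rewrite /det2 /line_coord subr_eq0 => /eqP ua.
case: u ua => u1 u2 /= ua.
have [a1_0|a1_nz] := eqVneq a.1 0; last by rewrite divfK // mulrAC ua mulfK.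
have a2_nz : a.2 != 0 by case: a_nz; rewrite ?a1_0 ?eqxx.
move: ua; rewrite a1_0 mulr0 => /eqP; rewrite mulf_eq0 (negbTE a2_nz) orbF.
by move=> /eqP ->; rewrite /= mulr0 divfK.
Qed.

Lemma det2_line_coordl a u v :
  nonzero2 a -> same_line u a -> det2 u v = line_coord a u * det2 a v.
Proof. by move=> a_nz /(line_coordP a_nz) {1}->; rewrite /det2 /=; ring. Qed.

Lemma line_coord_eq0 a u :
  nonzero2 a -> same_line u a -> nonzero2 u -> line_coord a u != 0.
Proof.
move=> a_nz u_a; apply: contra_neq => k0.
by rewrite (line_coordP a_nz u_a) k0 !mul0r.
Qed.

Lemma VB_pair (U : 'I_6 -> R * R) (x y : 'I_6) :
  x != y -> VB U [set x; y] = 2^-1 * `|det2 (U x) (U y)|.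
Proof.
move=> xy; rewrite /VB.
have : perm_eq (enum [set x; y]) [:: x; y].
  by apply: uniq_perm => [||z]; rewrite ?enum_uniq //= ?inE ?xy // mem_enum !inE.
case: (enum _) => [|p [|q [|? ?]]] /[dup] /perm_size // _ /perm_mem mem_pq /=.
have x_pq : x \in [:: p; q] by rewrite mem_pq mem_head.
have y_pq : y \in [:: p; q] by rewrite mem_pq !inE eqxx orbT.
move: x_pq y_pq xy; rewrite !inE => /orP[]/eqP-> /orP[]/eqP->;
  rewrite ?eqxx // => _.
by rewrite det2C normrN.
Qed.

End Lines.

Section CrossingPairings.
Variables (R : realFieldType) (a : R * R) (U : 'I_6 -> R * R).
Hypothesis a_nz : nonzero2 a.
Hypothesis U_lower : forall i : 'I_6, (i < 3)%N -> same_line (U i) a.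

Definition crossing_weight (i : 'I_6) : R :=
  if (i < 3)%N then `|line_coord a (U i)| else 2^-1 * `|det2 a (U i)|.

Lemma Phi_crossing (P : pairing) :
  (forall B, B \in val P -> crossing_pair B) ->
  Phi U P = \prod_i crossing_weight i.
Proof.
move=> P_crossing; rewrite /Phi.
have /and3P[/eqP cover_all triv _] := pairing_partition P.
have -> : \prod_i crossing_weight i =
          \prod_(i in cover (val P)) crossing_weight i.
  by apply: eq_bigl => i; rewrite cover_all inE.
rewrite big_trivIset //; apply: eq_bigr => B /P_crossing[x [y [x_lo y_hi ->]]].
have xy : x != y by rewrite -val_eqE neq_ltn (leq_trans x_lo y_hi).
rewrite VB_pair // big_setU1 ?big_set1 ?inE //=.
rewrite /crossing_weight x_lo ltnNge y_hi /=.
by rewrite (det2_line_coordl _ a_nz (U_lower x_lo)) normrM; ring.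
Qed.

Lemma Phi_lower_pair (P : pairing) (x y : 'I_6) :
  x != y -> (x < 3)%N -> (y < 3)%N -> [set x; y] \in val P -> Phi U P = 0.
Proof.
move=> xy x_lo y_lo xyP; rewrite /Phi (bigD1 [set x; y]) //= VB_pair //.
have : same_line (U x) (U y).
  exact: same_line_trans a_nz (U_lower x_lo) (same_line_sym (U_lower y_lo)).
by rewrite /same_line => ->; rewrite normr0 mulr0 mul0r.
Qed.

Lemma crossing_weight_prod_gt0 :
  (forall i, nonzero2 (U i)) ->
  (forall i : 'I_6, (3 <= i)%N -> ~ same_line a (U i)) ->
  0 < \prod_i crossing_weight i.
Proof.
move=> U_nz U_upper; apply: prodr_gt0 => i _; rewrite /crossing_weight.
case: ltnP => [i_lo|i_hi].
  by rewrite normr_gt0 (line_coord_eq0 a_nz (U_lower i_lo)).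
by rewrite mulr_gt0 ?invr_gt0 ?ltr0n // normr_gt0; apply/eqP/U_upper.
Qed.

End CrossingPairings.

Theorem lemma7p3 (R : realFieldType) (a b c : R * R)
  (U U' : 'I_6 -> R * R) :
  nonzero2 a -> nonzero2 b -> nonzero2 c ->
  ~ same_line a b -> ~ same_line a c -> ~ same_line b c ->
  (forall i, nonzero2 (U i)) -> (forall i, nonzero2 (U' i)) ->
  (forall i : 'I_6, (i < 3)%N -> same_line (U i) a) ->
  (forall i : 'I_6, (3 <= i)%N -> same_line (U i) b) ->
  (forall i : 'I_6, (i < 3)%N -> same_line (U' i) a) ->
  (forall i : 'I_6, (3 <= i < 5)%N -> same_line (U' i) b) ->
  (forall i : 'I_6, (5 <= i)%N -> same_line (U' i) c) ->
  (exists P, Phi U P != 0) /\ (exists P, Phi U' P != 0) /\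
  exists2 lambda : R, 0 < lambda & forall P, Phi U' P = lambda * Phi U P.
Proof.
move=> a_nz _ _ ab ac _ U_nz U'_nz U_a U_b U'_a U'_b U'_c.
have U_upper (i : 'I_6) : (3 <= i)%N -> ~ same_line a (U i).
  by move=> i_hi; apply: not_same_line_trans (U_nz i) (U_b i i_hi) ab.
have U'_upper (i : 'I_6) : (3 <= i)%N -> ~ same_line a (U' i).
  move=> i_hi; case: (ltnP i 5) => [i_lt5|i_ge5].
    by apply: not_same_line_trans (U'_nz i) (U'_b i _) ab; rewrite i_hi.
  exact: not_same_line_trans (U'_nz i) (U'_c i i_ge5) ac.
have K_gt0 := crossing_weight_prod_gt0 a_nz U_a U_nz U_upper.
have K'_gt0 := crossing_weight_prod_gt0 a_nz U'_a U'_nz U'_upper.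
have Phi_U := Phi_crossing a_nz U_a; have Phi_U' := Phi_crossing a_nz U'_a.
split.
  by exists mod3_pairing; rewrite Phi_U ?gt_eqF // => B /mod3_pairing_crossing.
split.
  by exists mod3_pairing; rewrite Phi_U' ?gt_eqF // => B /mod3_pairing_crossing.
exists ((\prod_i crossing_weight a U' i) / \prod_i crossing_weight a U i).
  by rewrite divr_gt0.
move=> P; have [[x [y [xy x_lo y_lo xyP]]] | P_crossing] :=
  pairing_lower_pair_or_crossing P.
  by rewrite !(Phi_lower_pair a_nz _ xy x_lo y_lo xyP) ?mulr0.
by rewrite Phi_U // Phi_U' // divfK ?gt_eqF.
Qed.
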